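(* The generalized student-proposing deferred acceptance algorithm with any of the LOCV, LOICV, HERF, or HEUF proposing methods is incentive compatible with certainty (IC-C).
   Context: Model: students $N$; colleges $M$, each college $c$ with positive integer capacity $x_c$ and strict preference $\succ_c$ over $N$; features $F$; utilities $u_s^f:M\to[0,1]$; for each student $s$ an independent distribution $\mu_s$ over weight vectors $w_s$ ($w_s^f\ge0$, $\sum_f w_s^f=1$). For realized $w_s$, $c\succeq_s^{w_s}c'$ iff $\sum_f w_s^fu_s^f(c)\ge\sum_f w_s^fu_s^f(c')$, strict version $\succ_s^{w_s}$; $\mathsf{null}$ ranked below any college. Generalized student-proposing DA: all students start unmatched with $R_s=\emptyset$; while some unmatched student $s$ has $R_s\ne M$, each such student proposes to $\mathsf{Next}(s,R_s)\notin R_s$ (computed from her reported utilities and distribution); each college keeps its $x_c$ most preferred students among those it holds and its new proposers and rejects the rest (rejected students add the college to $R_s$ and become unmatched). Output the final matching. HEUF: $\mathsf{Next}\in\arg\max_{c\notin R_s}\mathbb E[\sum_f w_s^fu_s^f(c)]$. LOCV: $q_s(c)$ = vector $(\Pr[c\succeq_s^{w_s}c'])_{c'\ne c}$ sorted ascending; colleges ordered by lexicographically larger $q_s$ first; $\mathsf{Next}$ returns first college in this order not in $R_s$. LOICV: same as LOCV but with vectors $(\Pr[c\succeq_s^{w_s}c'])_{c'\in M\setminus R_s,c'\ne c}$ recomputed for current $R_s$, returning the lexicographically largest college in $M\setminus R_s$. HERF: $\mathsf{Next}\in\arg\max_{c\notin R_s}\Pr[c\succeq_s^{w_s}c'\ \forall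 c'\notin R_s,c'\ne c]$. Ties are broken randomly or by a predetermined rule. IC-C: each student $s$ may report any $(u_s',\mu_s')$ instead of her true $(\{u_s^f\},\mu_s)$; with $\pi(s)$, $\pi'(s)$ her assignments under truthful report and misreport (others fixed), the algorithm is IC-C if $\Pr[\pi'(s)\succ_s^{w_s}\pi(s)]=1$ never occurs, the probability being over her true $w_s\sim\mu_s$ with true utilities. *)

From HB Require Import structures.
From mathcomp Require Import all_boot all_order all_algebra.
From mathcomp Require Import all_classical all_reals all_analysis.

Set Implicit Arguments.
Unset Strict Implicit.
Unset Printing Implicit Defensive.

Import Order.TTheory GRing.Theory Num.Theory.
Local Open Scope classical_set_scope.
Local Open Scope ring_scope.

(* Model.  A student's (reported or true) type is a pair (u, w):       *)
(*   w : F -> Omega -> R  a random weight vector on the probability    *)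
(*                        space (Omega, P); its law is mu_s.           *)

Section Model.
Context {R : realType} {d : measure_display} {Omega : measurableType d}.
Variable (P : probability Omega R).
Context {M F : finType}.

Definition score (u : F -> M -> R) (w : F -> Omega -> R) (c : M) (om : Omega) : R :=
  \sum_(f : F) w f om * u f c.

Definition wpref u w (c c' : M) (om : Omega) : Prop :=
  score u w c' om <= score u w c om.

(* strict preference over assignments, null (= None) below any college *)
Definition spref u w (o o' : option M) (om : Omega) : Prop :=
  match o, o' with
  | Some c, Some c' => score u w c' om < score u w c om
  | Some _, None => True
  | None, _ => False
  end.

Definition valid_type (u : F -> M -> R) (w : F -> Omega -> R) : Prop :=
  (forall f c, 0 <= u f c <= 1) /\
  (forall f, measurable_fun setT (w f)) /\
  (forall f om, 0 <= w f om) /\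
  (forall om, \sum_(f : F) w f om = 1).

Definition prge u w (c c' : M) : \bar R := P [set om | wpref u w c c' om].

Fixpoint lexle (s t : seq (\bar R)) : bool :=
  match s, t with
  | [::], _ => true
  | _ :: _, [::] => false
  | x :: s', y :: t' => ((x < y)%E) || ((x == y) && lexle s' t')
  end.

Definition sort_asc (s : seq (\bar R)) : seq (\bar R) :=
  sort (fun x y : \bar R => (x <= y)%E) s.

Definition qLOCV u w (c : M) : seq (\bar R) :=
  sort_asc [seq prge u w c c' | c' <- enum M & c' != c].

Definition qLOICV u w (Rs : {set M}) (c : M) : seq (\bar R) :=
  sort_asc [seq prge u w c c' | c' <- enum M & (c' \notin Rs) && (c' != c)].

Definition pHERF u w (Rs : {set M}) (c : M) : \bar R :=
  P [set om | forall c', c' \notin Rs -> c' != c -> wpref u w c c' om].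

Definition eHEUF u w (c : M) : \bar R :=
  (\int[P]_om (score u w c om)%:E)%E.

End Model.

Inductive method := LOCV | LOICV | HERF | HEUF.

(* [next_spec P m u w nx]: nx : {set M} -> M is a Next function of method m
   for the (reported) type (u, w): for every R_s <> M it returns a college
   outside R_s that is optimal for the method among colleges outside R_s
   (ties may be broken arbitrarily). *)
Definition next_spec {R : realType} {d} {Omega : measurableType d}
  (P : probability Omega R) {M F : finType} (m : method)
  (u : F -> M -> R) (w : F -> Omega -> R) (nx : {set M} -> M) : Prop :=
  forall Rs : {set M}, Rs != [set: M]%SET ->
    nx Rs \notin Rs /\
    forall c', c' \notin Rs ->
      match m with
      | LOCV => lexle (qLOCV P u w c') (qLOCV P u w (nx Rs))
      | LOICV => lexle (qLOICV P u w Rs c') (qLOICV P u w Rs (nx Rs))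
      | HERF => (pHERF P u w Rs c' <= pHERF P u w Rs (nx Rs))%E
      | HEUF => (eHEUF P u w c' <= eHEUF P u w (nx Rs))%E
      end.

(* State: for each student, the college holding her (None = unmatched) *)
(* and her rejection set R_s.                                          *)
Section DA.
Context {N M : finType}.
Variables (cap : M -> nat) (cpref : M -> rel N) (nx : N -> {set M} -> M).

Definition da_state := ((N -> option M) * (N -> {set M}))%type.

Definition da_init : da_state := (fun _ => None, fun _ => @finset.set0 M).

Definition proposes (st : da_state) (t : N) : bool :=
  (st.1 t == None) && (st.2 t != [set: M]%SET).

(* college currently considering t (holding her or receiving her proposal) *)
Definition cand (st : da_state) (t : N) : option M :=
  match st.1 t with
  | Some c => Some c
  | None => if proposes st t then Some (nx t (st.2 t)) else None
  end.

Definition keeps (st : da_state) (c : M) (t : N) : bool :=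
  (#|[set t' | (cand st t' == Some c) && cpref c t' t]%SET| < cap c)%N.

Definition da_step (st : da_state) : da_state :=
  (fun t => match cand st t with
            | Some c => if keeps st c t then Some c else None
            | None => None
            end,
   fun t => match cand st t with
            | Some c => if keeps st c t then st.2 t else (c |: st.2 t)%SET
            | None => st.2 t
            end).

Definition da_terminal (st : da_state) : bool :=
  [forall t, (st.1 t != None) || (st.2 t == [set: M]%SET)].

Definition da_outcome (pi : N -> option M) : Prop :=
  exists n, da_terminal (iter n da_step da_init) /\
            (iter n da_step da_init).1 = pi.

End DA.

Definition strict_total {N : finType} (r : rel N) : Prop :=
  irreflexive r /\ transitive r /\ (forall x y, x != y -> r x y || r y x).

From HB Require Import structures.
From mathcomp Require Import all_boot all_order all_algebra.
From mathcomp Require Import all_classical all_reals all_analysis.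
From mathcomp Require Import zify lra measurable_realfun.
Import Order.TTheory GRing.Theory Num.Theory.
Set Implicit Arguments.
Unset Strict Implicit.
Unset Printing Implicit Defensive.

(** Fix the reports of the other students and compare the truthful run of
  deferred acceptance with the run in which [s] misreports.  In both runs the
  rejection set of a student is a prefix of the chain of proposals generated by
  her Next function, and a college that rejects someone stays full of students
  it prefers to her.  The blocking-lemma argument of Gale, Sotomayor, Dubins and
  Freedman then shows that the college [c'] that [s] obtains by misreporting
  never rejected her in the truthful run.  Hence her truthful college [c] was
  chosen by her Next function while [c'] was still available, so [c] is at
  least as good as [c'] for the proposing method.  But if [c'] beat [c] with
  probability one, [c'] would have a larger expected utility (HEUF) and a
  lexicographically larger vector of pairwise winning probabilities (LOCV,
  LOICV), and [c] would be best among the remaining colleges only on a null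
  set, whereas some remaining college is best with positive probability
  (HERF). *)

(** * Ranks in a strict total order *)

Section Rank.
Variables (T : finType) (r : rel T).
Hypotheses (r_irr : irreflexive r) (r_trans : transitive r)
  (r_total : forall x y, x != y -> r x y || r y x).

Definition rank (G : {set T}) x := #|[set y in G | r y x]|.

Lemma r_asym x y : r x y -> r y x -> False.
Proof. by move=> rxy /(r_trans rxy); rewrite r_irr. Qed.

Lemma rank_lt (G : {set T}) x y : x \in G -> r x y -> rank G x < rank G y.
Proof.
move=> xG rxy; apply: proper_card; apply/properP; split.
  by apply/fintype.subsetP=> z; rewrite !inE => /andP[-> /r_trans->].
by exists x; rewrite !inE ?xG ?rxy ?r_irr.
Qed.

Lemma rank_lt_card (G : {set T}) x : x \in G -> rank G x < #|G|.
Proof.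
move=> xG; apply: proper_card; apply/properP; split.
  by apply/fintype.subsetP=> z; rewrite inE => /andP[].
by exists x; rewrite // inE r_irr andbF.
Qed.

Lemma exists_worst (G : {set T}) : G != finset.set0 ->
  exists2 w, w \in G & forall y, y \in G -> y != w -> r y w.
Proof.
case/set0Pn=> x0 x0G; have [w wG wmax] := arg_maxnP (rank G) x0G.
exists w => // y yG /r_total /orP[] // rwy.
by have := wmax y yG; rewrite /= leqNgt rank_lt.
Qed.

Lemma card_rank_lt_le (G : {set T}) k : #|[set x in G | rank G x < k]| <= k.
Proof.
set K := [set x in G | rank G x < k].
have [->|/exists_worst[w wK wW]] := eqVneq K finset.set0; first by rewrite cards0.
move: (wK); rewrite inE => /andP[wG rkw].
rewrite (cardsD1 w K) wK add1n; apply: leq_ltn_trans rkw.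
apply: subset_leq_card; apply/fintype.subsetP=> y; rewrite !inE => /andP[ynw yK].
by move: (yK) => /andP[-> _]; rewrite wW // inE yK.
Qed.

Lemma card_rank_lt_ge (G : {set T}) k : k <= #|G| ->
  k <= #|[set x in G | rank G x < k]|.
Proof.
move Gn: #|G| => n; elim: n G k Gn => [|n IH] G k Gn kn.
  by move: kn; rewrite leqn0 => /eqP ->.
have /exists_worst[w wG wW] : G != finset.set0 by rewrite -card_gt0 Gn.
have G'n : #|G :\ w| = n by move: Gn; rewrite (cardsD1 w G) wG add1n => -[].
have [klt|kgt|->] := ltngtP k n.+1; last 2 first.
- by move: kn; rewrite leqNgt kgt.
- rewrite -Gn; apply: subset_leq_card; apply/fintype.subsetP=> y yG.
  by rewrite inE yG rank_lt_card.
apply: leq_trans (IH _ _ G'n klt) _.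
apply: subset_leq_card; apply/fintype.subsetP=> y; rewrite !inE => /andP[/andP[ynw yG]].
suff -> : rank (G :\ w) y = rank G y by move=> ->; rewrite yG.
apply: eq_card => z; rewrite !inE; have [->|//] := eqVneq z w.
by rewrite wG; apply/esym/negbTE/negP => /r_asym; apply; apply: wW.
Qed.

End Rank.

(** * Deferred acceptance *)

Section ProposalPrefixes.
Variables (M : finType) (f : {set M} -> M).

Definition propose_next (X : {set M}) := if X == [set: M] then X else f X |: X.

Definition proposals k := iter k propose_next finset.set0.

Definition proposal_prefix (X : {set M}) := exists k, X = proposals k.

Lemma proposals_mono i j : i <= j -> proposals i \subset proposals j.
Proof.
move=> /subnK <-; elim: (j - i) => [|k IH] //; rewrite addSn /proposals iterS.
apply: fintype.subset_trans IH _; rewrite /propose_next.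
by case: ifP => _; rewrite ?finset.subsetUr.
Qed.

Lemma proposal_prefix0 : proposal_prefix finset.set0.
Proof. by exists 0. Qed.

Lemma proposal_prefixU (X : {set M}) : proposal_prefix X -> X != [set: M] ->
  proposal_prefix (f X |: X).
Proof.
by move=> [k ->] kT; exists k.+1; rewrite /proposals iterS /propose_next (negbTE kT).
Qed.

Lemma proposal_prefix_total (X Y : {set M}) : proposal_prefix X -> proposal_prefix Y ->
  X \subset Y \/ Y \subset X.
Proof.
move=> [i ->] [j ->]; have [ij|/ltnW ji] := leqP i j.
  by left; apply: proposals_mono.
by right; apply: proposals_mono.
Qed.

Lemma proposal_prefix_next (X Y : {set M}) : proposal_prefix X -> proposal_prefix Y ->
  X \proper Y -> f X \in Y.
Proof.
move=> [i ->] [j ->] /properP[_ [z zj zi]].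
have [ji|ij] := leqP j i; first by move: zi; rewrite (fintype.subsetP (proposals_mono ji)).
move: (proposals_mono ij); rewrite /proposals iterS -/(proposals i) /propose_next.
case: ifP => [/eqP iT|_]; first by move: zi; rewrite iT inE.
by move/fintype.subsetP; apply; rewrite !inE eqxx.
Qed.

End ProposalPrefixes.

Section DAInvariant.
Variables (N M : finType) (cap : M -> nat) (cpref : M -> rel N).
Variable nx : N -> {set M} -> M.
Hypothesis cpref_total : forall c, strict_total (cpref c).

Local Notation step := (da_step cap cpref nx).
Local Notation pool st c := [set t | cand nx st t == Some c].

Record da_inv (st : @da_state N M) : Prop := DAInv {
  held_next : forall t c, st.1 t = Some c -> st.2 t != [set: M] /\ nx t (st.2 t) = c;
  rejections_prefix : forall t, proposal_prefix (nx t) (st.2 t);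
  held_le_cap : forall c, #|[set t | st.1 t == Some c]| <= cap c;
  rejecter_full_better : forall t c, c \in st.2 t ->
    cap c <= #|[set t' | (st.1 t' == Some c) && cpref c t' t]| }.

Lemma keepsE st c t : keeps cap cpref nx st c t = (rank (cpref c) (pool st c) t < cap c).
Proof. by rewrite /keeps /rank; congr (_ < _); apply: eq_card => y; rewrite !inE. Qed.

Lemma cand_Some st t c : cand nx st t = Some c ->
  st.1 t = Some c \/ [/\ st.1 t = None, st.2 t != [set: M] & nx t (st.2 t) = c].
Proof.
rewrite /cand /proposes; case: (st.1 t) => [c' -> | ]; first by left.
by case: ifP => // /andP[_ ?] [<-]; right.
Qed.

Lemma step_heldE st t c :
  ((step st).1 t == Some c) = (cand nx st t == Some c) && keeps cap cpref nx st c t.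
Proof.
rewrite /da_step /=; case: (cand nx st t) => [c'|] //=.
have [->|ne] := eqVneq c' c; first by case: keeps; rewrite ?eqxx.
by case: keeps; rewrite // (inj_eq Some_inj) (negbTE ne).
Qed.

Lemma step_rejected st t c : c \in (step st).2 t ->
  c \in st.2 t \/ (cand nx st t = Some c /\ ~~ keeps cap cpref nx st c t).
Proof.
rewrite /da_step /=; case: (cand nx st t) => [c'|]; last by left.
case: ifP => kept; first by left.
by rewrite !inE => /orP[/eqP ->|]; [right; rewrite kept|left].
Qed.

Lemma step_keeps_better st c t :
  cap c <= #|[set t' | (cand nx st t' == Some c) && cpref c t' t]| ->
  cap c <= #|[set t' | ((step st).1 t' == Some c) && cpref c t' t]|.
Proof.
have [irr [trans total]] := cpref_total c.
set G := [set t' | _ && _] => capG.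
apply: leq_trans (card_rank_lt_ge irr trans total capG) _.
apply: subset_leq_card; apply/fintype.subsetP => x; rewrite !inE.
case/andP=> /andP[xc xt] rk; rewrite step_heldE xc xt keepsE andbT.
apply: leq_ltn_trans rk; apply: subset_leq_card; apply/fintype.subsetP => y.
by rewrite !inE => /andP[-> yx]; rewrite yx (trans _ _ _ yx xt).
Qed.

Lemma da_inv_init : da_inv da_init.
Proof.
split=> //= [t|c|t c]; first exact: proposal_prefix0.
  by rewrite (_ : [set t | false] = finset.set0) ?cards0 //; apply/setP => x; rewrite !inE.
by rewrite inE.
Qed.

Lemma da_inv_step st : da_inv st -> da_inv (step st).
Proof.
case=> Hheld Hprefix Hcap Hfull; split.
- move=> t c /eqP; rewrite step_heldE => /andP[/eqP tc kept].
  rewrite /da_step /= tc kept.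
  by case: (cand_Some tc) => [/Hheld|[]].
- move=> t; rewrite /da_step /=; case tc: (cand nx st t) => [c|]; last exact: Hprefix.
  case: ifP => _; first exact: Hprefix.
  by case: (cand_Some tc) => [/Hheld[? <-]|[_ ? <-]]; apply: proposal_prefixU.
- move=> c; have [irr [trans total]] := cpref_total c.
  apply: leq_trans (card_rank_lt_le irr trans total (pool st c) (cap c)).
  apply: subset_leq_card; apply/fintype.subsetP => t.
  by rewrite !inE step_heldE keepsE.
- move=> t c /step_rejected[old|[_ rejected]]; apply: step_keeps_better.
    apply: leq_trans (Hfull _ _ old) _; apply: subset_leq_card.
    apply/fintype.subsetP => x; rewrite !inE => /andP[/eqP xc ->].
    by rewrite /cand xc eqxx.
  move: rejected; rewrite keepsE /rank -leqNgt; congr (_ <= _).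
  by apply: eq_card => y; rewrite !inE.
Qed.

Lemma da_inv_iter n : da_inv (iter n step da_init).
Proof. by elim: n => [|n IH]; [apply: da_inv_init|rewrite iterS; apply: da_inv_step]. Qed.

Lemma rejecter_full st t c : da_inv st -> c \in st.2 t ->
  cap c <= #|[set h | st.1 h == Some c]|.
Proof.
move=> inv /(rejecter_full_better inv) /leq_trans; apply; apply: subset_leq_card.
by apply/fintype.subsetP => x; rewrite !inE => /andP[].
Qed.

Lemma rejecter_prefers_held st t c h : da_inv st -> c \in st.2 t ->
  st.1 h = Some c -> cpref c h t.
Proof.
move=> inv ct hc.
have sub : [set h | (st.1 h == Some c) && cpref c h t] \subset [set h | st.1 h == Some c].
  by apply/fintype.subsetP=> x; rewrite !inE => /andP[].
have /eqP eq : [set h | (st.1 h == Some c) && cpref c h t] == [set h | st.1 h == Some c].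
  by rewrite eqEcard sub (leq_trans (held_le_cap inv c) (rejecter_full_better inv ct)).
have : h \in [set h | st.1 h == Some c] by rewrite inE hc.
by rewrite -eq inE => /andP[].
Qed.

Lemma step_releases st c t0 t1 : da_inv st -> c \in st.2 t1 ->
  (step st).1 t0 = Some c -> st.1 t0 != Some c ->
  exists m, [/\ st.1 m = Some c, cpref c m t1, c \in (step st).2 m & (step st).1 m = None].
Proof.
move=> inv ct1 t0c t0new.
set Old := [set h | st.1 h == Some c]; set New := [set h | (step st).1 h == Some c].
have t0free : st.1 t0 = None.
  move: t0c t0new; rewrite /da_step /cand /=; case: (st.1 t0) => [c'|] //.
  by case: ifP => // _ [->]; rewrite eqxx.
have /subsetPn[m] : ~~ (Old \subset New).
  apply/negP => sub; have : t0 |: Old \subset New.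
    by rewrite finset.subUset sub finset.sub1set inE t0c eqxx.
  move/subset_leq_card; rewrite cardsU1 inE t0free /= add1n.
  move/leq_trans/(_ (held_le_cap (da_inv_step inv) c)).
  by rewrite ltnNge (rejecter_full inv ct1).
rewrite !inE => /eqP mc mnew; exists m; split => //.
  exact: rejecter_prefers_held inv ct1 mc.
all: move: mnew; rewrite /da_step /cand /= mc.
all: by case: ifP => _; rewrite ?eqxx // !inE eqxx.
Qed.

End DAInvariant.

Section DARun.
Variables (N M : finType) (cap : M -> nat) (cpref : M -> rel N).
Variable nx : N -> {set M} -> M.
Implicit Type st : @da_state N M.

Local Notation step := (da_step cap cpref nx).

Lemma rejections_step_sub st t : st.2 t \subset (step st).2 t.
Proof.
rewrite /da_step /=; case: (cand nx st t) => [c|] //.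
by case: ifP => _ //; apply: finset.subsetUr.
Qed.

Lemma rejections_iter_sub st a b t : a <= b ->
  (iter a step st).2 t \subset (iter b step st).2 t.
Proof.
move=> /subnK <-; elim: (b - a) => [|k IH] //; rewrite addSn iterS.
exact: fintype.subset_trans IH (rejections_step_sub _ _).
Qed.

Lemma step_held_rejections st t : (step st).1 t != None -> (step st).2 t = st.2 t.
Proof.
rewrite /da_step /=; case: (cand nx st t) => [c|] //.
by case: ifP.
Qed.

Lemma held_rejections_const st a b t : a <= b ->
  (forall k, a < k <= b -> (iter k step st).1 t != None) ->
  (iter b step st).2 t = (iter a step st).2 t.
Proof.
elim: b => [|b IH] ab held; first by move: ab; rewrite leqn0 => /eqP ->.
case: (ltngtP a b.+1) ab => // [{}ab|<-] _ //.
move: (held b.+1); rewrite ab leqnn iterS => /(_ isT) /step_held_rejections ->.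
by apply: IH => // k /andP[ak kb]; apply: held; rewrite ak leqW.
Qed.

End DARun.

Lemma terminal_unmatched (N M : finType) (st : @da_state N M) t :
  da_terminal st -> st.1 t = None -> st.2 t = [set: M].
Proof. by move=> /forallP /(_ t); case: (st.1 t) => //= /eqP. Qed.

Lemma last_change (T : finType) (A : eqType) (x : nat -> T -> A) (S : {set T}) n t0 :
  t0 \in S -> x 0 t0 != x n t0 ->
  exists r, [/\ r < n, exists2 t, t \in S & x r t != x n t &
                forall t k, t \in S -> r < k <= n -> x k t = x n t].
Proof.
move=> t0S t0ch.
pose changed r := (r < n) && [exists t in S, x r t != x n t].
have changed0 : changed 0.
  rewrite /changed; apply/andP; split; last by apply/existsP; exists t0; rewrite t0S.
  by rewrite lt0n; apply: contraNneq t0ch => ->.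
have ub r : changed r -> r <= n by case/andP => /ltnW.
have [r /andP[rn /existsP[t /andP[tS tch]]] rmax] := ex_maxnP (ex_intro changed 0 changed0) ub.
exists r; split => //; first by exists t.
move=> t' k t'S /andP[rk]; rewrite leq_eqVlt => /orP[/eqP -> //|kn].
apply/eqP; apply: contraTT rk => ch; rewrite -leqNgt; apply: rmax.
by rewrite /changed kn; apply/existsP; exists t'; rewrite t'S.
Qed.

Lemma sum_card_fibers (T U : finType) (f : T -> option U) (A : {set T}) (D : {set U}) :
  \sum_(d in D) #|[set t in A | f t == Some d]| =
  #|[set t in A | if f t is Some d then d \in D else false]|.
Proof.
have cardE (P : pred T) : #|[set t in A | P t]| = \sum_(t in A) (P t : nat).
  by rewrite -sum1dep_card big_mkcondr; apply: eq_bigr => t _; case: (P t).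
under eq_bigr => d _ do rewrite cardE.
rewrite cardE exchange_big /=; apply: eq_bigr => t _.
case: (f t) => [d0|]; last by rewrite big1.
under eq_bigr => d _ do rewrite (inj_eq Some_inj).
case d0D: (d0 \in D); last by rewrite big1 // => d dD; case: eqP d0D => // ->; rewrite dD.
rewrite (bigD1 d0) //= eqxx big1 // => d /andP[_].
by rewrite eq_sym => /negbTE ->.
Qed.

Section Manipulation.
Variables (N M : finType) (cap : M -> nat) (cpref : M -> rel N).
Variables (nx nx' : N -> {set M} -> M) (s : N).
Hypothesis cpref_total : forall c, strict_total (cpref c).
Hypothesis nx'_nx : forall t, t != s -> nx' t = nx t.
Variables nA nB : nat.

Local Notation stA k := (iter k (da_step cap cpref nx) da_init).
Local Notation fB := (iter nB (da_step cap cpref nx') da_init).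
Hypotheses (termA : da_terminal (stA nA)) (termB : da_terminal fB).
Local Notation mu := (stA nA).1.
Local Notation RA := (stA nA).2.
Local Notation mu' := fB.1.
Local Notation RB := fB.2.

Let invA k : da_inv cap cpref nx (stA k) := da_inv_iter cap nx cpref_total k.
Let invB : da_inv cap cpref nx' fB := da_inv_iter cap nx' cpref_total nB.

Let cpref_asym c x y : cpref c x y -> cpref c y x -> False.
Proof. by have [irr [trans _]] := cpref_total c; apply: r_asym. Qed.

Definition matched_to_rejecter t := if mu' t is Some c then c \in RA t else false.

Lemma rejection_persists t c : t != s -> c \in RA t -> ~~ matched_to_rejecter t ->
  c \in RB t.
Proof.
move=> ts cA tnr; apply: contraT => cB.
have prefA := rejections_prefix (invA nA) t.
have prefB := rejections_prefix invB t; rewrite nx'_nx // in prefB.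
case: (proposal_prefix_total prefA prefB) => [/fintype.subsetP/(_ c cA)|BA].
  by rewrite (negbTE cB).
have /(proposal_prefix_next prefB prefA) : RB t \proper RA t.
  by apply/properP; split => //; exists c.
case tB: (mu' t) => [d|]; last by move: cB; rewrite (terminal_unmatched termB tB) inE.
have [_] := held_next invB tB; rewrite nx'_nx // => ->.
by move: tnr; rewrite /matched_to_rejecter tB => /negbTE ->.
Qed.

Lemma lost_college_rejects t c : t != s -> mu t = Some c -> ~~ matched_to_rejecter t ->
  mu' t != Some c -> c \in RB t.
Proof.
move=> ts tA tnr tB; apply: contraT => cB.
have prefA := rejections_prefix (invA nA) t.
have prefB := rejections_prefix invB t; rewrite nx'_nx // in prefB.
have [_ cE] := held_next (invA nA) tA.
case tB': (mu' t) => [d|]; last by move: cB; rewrite (terminal_unmatched termB tB') inE.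
have [_] := held_next invB tB'; rewrite nx'_nx // => dE.
have [AB|] := eqVneq (RA t) (RB t); first by move: tB; rewrite tB' -dE -AB cE eqxx.
case: (proposal_prefix_total prefA prefB) => sub ne.
  have : RA t \proper RB t by rewrite finset.properEneq ne.
  by move/(proposal_prefix_next prefA prefB); rewrite cE (negbTE cB).
have : RB t \proper RA t by rewrite finset.properEneq eq_sym ne.
move/(proposal_prefix_next prefB prefA); rewrite dE.
by move: tnr; rewrite /matched_to_rejecter tB' => /negbTE ->.
Qed.

Section MatchedToRejecter.
Hypothesis s_matched : matched_to_rejecter s.

Lemma rejecter_keeps_held h t1 c : matched_to_rejecter t1 -> mu' t1 = Some c ->
  mu h = Some c -> ~~ matched_to_rejecter h -> mu' h = Some c.
Proof.
move=> t1r t1B hA hnr; apply/eqP; apply: contraT => hB.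
have hs : h != s by apply: contraNneq hnr => ->.
have cB := lost_college_rejects hs hA hnr hB.
have cA : c \in RA t1 by move: t1r; rewrite /matched_to_rejecter t1B.
have ht1 := rejecter_prefers_held (invA nA) cA hA.
by case: (cpref_asym (rejecter_prefers_held invB cB t1B) ht1).
Qed.

Let S := [set t | matched_to_rejecter t].
Let D := [set d | [exists t, matched_to_rejecter t && (mu' t == Some d)]].

(* [d] rejected some student of [S] in the truthful run, so it is full there,
   and under the misreport it still holds its truthful students outside [S]. *)
Lemma card_matched_to_rejecter_le d : d \in D ->
  #|[set t in S | mu' t == Some d]| <= #|[set t in S | mu t == Some d]|.
Proof.
rewrite inE => /existsP[t1 /andP[t1r /eqP t1B]].
have dA : d \in RA t1 by move: t1r; rewrite /matched_to_rejecter t1B.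
have fullA := rejecter_full (invA nA) dA; have capB := held_le_cap invB d.
set HA := [set h | mu h == Some d] in fullA *.
set HB := [set h | mu' h == Some d] in capB *.
have : #|HA :\: S| <= #|HB :\: S|.
  apply/subset_leq_card/fintype.subsetP => h; rewrite !inE => /andP[hnr /eqP hA].
  by rewrite hnr (rejecter_keeps_held t1r t1B hA hnr) eqxx.
have -> : [set t in S | mu' t == Some d] = HB :&: S by apply/setP => x; rewrite !inE andbC.
have -> : [set t in S | mu t == Some d] = HA :&: S by apply/setP => x; rewrite !inE andbC.
have := cardsID S HA; have := cardsID S HB; lia.
Qed.

Lemma matched_to_rejecter_held t : matched_to_rejecter t ->
  exists2 d, mu t = Some d & d \in D.
Proof.
have SB : [set t in S | if mu' t is Some d then d \in D else false] = S.
  apply/setP => x; rewrite !inE; case xr: (matched_to_rejecter x) => //=.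
  move: (xr); rewrite /matched_to_rejecter; case xB: (mu' x) => [d|] // _.
  by rewrite inE; apply/existsP; exists x; rewrite xr xB eqxx.
have : #|S| <= #|[set t in S | if mu t is Some d then d \in D else false]|.
  rewrite -{1}SB -!sum_card_fibers; apply: leq_sum => d.
  exact: card_matched_to_rejecter_le.
set SA := [set t in S | _] => le_S_SA.
have /eqP SAE : SA == S.
  by rewrite eqEcard le_S_SA andbT; apply/fintype.subsetP => x; rewrite inE => /andP[].
move=> tr; have : t \in SA by rewrite SAE inE.
by rewrite inE => /andP[_]; case: (mu t) => // d dD; exists d.
Qed.

(* Let [r.+1] be the last round of the truthful run in which a student [t0] of
   [S] reaches her final college [c0].  As [c0 \in D], it had already rejected
   some [t1 \in S] that it holds under the misreport; being full, it releases a
   student [m] it prefers to [t1].  But [m \notin S], so [c0] also rejects [m]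
   under the misreport while holding [t1], hence prefers [t1] to [m]. *)
Lemma manipulator_not_matched_to_rejecter : False.
Proof.
have sS : s \in S by rewrite inE.
have [ds dsA _] := matched_to_rejecter_held s_matched.
have s_changed : (stA 0).1 s != mu s by rewrite dsA.
have [r [rn [t0 t0S t0_changed] stable]] :=
  last_change (x := fun k => (stA k).1) sS s_changed.
have t0r : matched_to_rejecter t0 by rewrite inE in t0S.
have [c0 t0A /[!inE] /existsP[t1 /andP[t1r /eqP t1B]]] := matched_to_rejecter_held t0r.
have t1S : t1 \in S by rewrite inE.
have [d1 t1A _] := matched_to_rejecter_held t1r.
have RA_t1 : RA t1 = (stA r).2 t1.
  apply: held_rejections_const (ltnW rn) _ => k rk.
  by rewrite (stable _ _ t1S rk) t1A.
have c0t1 : c0 \in (stA r).2 t1.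
  by rewrite -RA_t1; move: t1r; rewrite /matched_to_rejecter t1B.
have t0_arrives : (da_step cap cpref nx (stA r)).1 t0 = Some c0.
  by rewrite -iterS (stable _ _ t0S) ?ltnSn.
have t0_new : (stA r).1 t0 != Some c0 by rewrite -t0A.
have [m [_ mt1 c0m mfree]] := step_releases cpref_total (invA r) c0t1 t0_arrives t0_new.
rewrite -iterS in c0m mfree.
have mnr : ~~ matched_to_rejecter m.
  apply/negP => mr; have mS : m \in S by rewrite inE.
  have [dm] := matched_to_rejecter_held mr.
  by rewrite -(stable _ _ mS (_ : r < r.+1 <= nA)) ?mfree ?ltnSn.
have c0mA : c0 \in RA m.
  exact: fintype.subsetP (rejections_iter_sub cap cpref nx da_init m rn) _ c0m.
have ms : m != s by apply: contraNneq mnr => ->.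
have := rejecter_prefers_held invB (rejection_persists ms c0mA mnr) t1B.
exact: cpref_asym mt1.
Qed.

End MatchedToRejecter.

Lemma manipulation_not_rejected c' : mu' s = Some c' -> c' \notin RA s.
Proof.
move=> sB; apply/negP => c'A; apply: manipulator_not_matched_to_rejecter.
by rewrite /matched_to_rejecter sB.
Qed.

End Manipulation.

Lemma manipulation_outcome (N M : finType) (cap : M -> nat) (cpref : M -> rel N)
    (nx nx' : N -> {set M} -> M) (s : N) (pi pi' : N -> option M) c' :
  (forall c, strict_total (cpref c)) -> (forall t, t != s -> nx' t = nx t) ->
  da_outcome cap cpref nx pi -> da_outcome cap cpref nx' pi' -> pi' s = Some c' ->
  exists X, [/\ X != [set: M], c' \notin X & pi s = Some (nx s X)].
Proof.
move=> cpref_total nx'_nx [nA [termA <-]] [nB [termB <-]] sB.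
have c'A := manipulation_not_rejected cpref_total nx'_nx termA termB sB.
exists ((iter nA (da_step cap cpref nx) da_init).2 s).
case sA: (_.1 s) => [c|]; last by move: c'A; rewrite (terminal_unmatched termA sA) inE.
by have [AT <-] := held_next (da_inv_iter cap nx cpref_total nA) sA.
Qed.

(** * Preference probabilities *)

Local Open Scope classical_set_scope.
Local Open Scope ring_scope.

Lemma measurable_set_lt (d : measure_display) (T : measurableType d) (R : realType)
    (f g : T -> R) :
  measurable_fun setT f -> measurable_fun setT g -> measurable [set x | f x < g x].
Proof.
move=> mf mg; have := measurable_fun_ltr mf mg measurableT (_ : measurable [set true]).
by rewrite setTI; apply.
Qed.

Lemma integral_gt0_as (d : measure_display) (T : measurableType d) (R : realType)
    (P : probability T R) (g : T -> R) :
  P.-integrable setT (EFin \o g) -> P [set x | 0 < g x] = 1%E ->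
  (0 < \int[P]_x (g x)%:E)%E.
Proof.
move=> ig Pg; set E := [set x | 0 < g x].
(* The integral is that of [|g|] over [E]; were it [0], [g] would vanish almost
   everywhere on [E], making [E] null. *)
have mg : measurable_fun setT g by apply/measurable_EFinP; exact: measurable_int ig.
have mE : measurable E by apply: measurable_set_lt.
have mCE : measurable (~` E) by apply: measurableC.
have PCE : P (~` E) = 0%E by rewrite probability_setC // Pg subee.
rewrite (negligible_integral mCE measurableT ig PCE) setTD setCK.
have -> : (\int[P]_(x in E) (g x)%:E = \int[P]_(x in E) `|(g x)%:E|)%E.
  by apply: eq_integral => x /[!inE] Ex; rewrite gee0_abs // lee_fin ltW.
rewrite lt0e integral_ge0 ?andbT; last by move=> x _; apply: abse_ge0.
have mgE : measurable_fun E (EFin \o g) by apply: measurable_funS (measurable_int _ ig).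
apply/negP => /eqP /(ae_eq_integral_abs P mE mgE) [N [mN PN0 EN]].
suff : (P E <= P N)%E by rewrite Pg PN0 lee_fin ler10.
apply: le_measure; rewrite ?inE // => x Ex; apply: EN => /(_ Ex) [].
by apply/eqP; rewrite gt_eqF.
Qed.

Lemma sorted_count_ge_not_lexle (R : realType) (sa sb : seq (\bar R)) :
  sorted (fun x y => x <= y)%E sa -> sorted (fun x y => x <= y)%E sb -> size sa = size sb ->
  (forall z, count (fun y => z <= y)%E sa <= count (fun y => z <= y)%E sb)%N ->
  (exists z, count (fun y => z <= y)%E sa < count (fun y => z <= y)%E sb)%N ->
  ~~ lexle sb sa.
Proof.
elim: sa sb => [|x sa IH] [|y sb] //= ssa ssb sz le_cnt [z lt_cnt].
  by move: lt_cnt; rewrite ltnn.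
case: sz => sz.
have x_min : all (fun v => x <= v)%E sa by apply: order_path_min => //; exact: le_trans.
have xy : (x <= y)%E.
  rewrite leNgt; apply/negP => yx; move: (le_cnt x); move: x_min; rewrite all_count => /eqP.
  rewrite /= lexx (lt_geF yx) add0n add1n => ->.
  by move/leq_trans/(_ (count_size _ _)); rewrite sz ltnn.
rewrite negb_or (le_gtF xy) /=; have [yx|//] := eqVneq y x.
rewrite {}yx in le_cnt lt_cnt *.
apply: IH; [exact: path_sorted ssa|exact: path_sorted ssb|by []| |].
- by move=> z'; have := le_cnt z'; rewrite /= leq_add2l.
- by exists z; move: lt_cnt; rewrite /= ltn_add2l.
Qed.

Lemma count_enum (T : finType) (a : pred T) : count a (enum T) = #|[set x | a x]%SET|.
Proof.
rewrite cardsE cardE /enum_mem size_filter count_filter.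
by apply: eq_count => x; rewrite /= andbT.
Qed.

Section Score.
Variables (R : realType) (d : measure_display) (Omega : measurableType d).
Variable P : probability Omega R.
Variables (M F : finType) (U : F -> M -> R) (W : F -> Omega -> R).
Hypothesis UW_valid : valid_type U W.

Local Notation sc c := (score U W c).

Lemma measurable_score c : measurable_fun setT (sc c).
Proof.
have [_ [mW _]] := UW_valid.
by apply: measurable_sum => f; apply: measurable_funM.
Qed.

Lemma score_ge0_le1 c om : 0 <= sc c om <= 1.
Proof.
have [U01 [_ [W0 W1]]] := UW_valid; rewrite /score; apply/andP; split.
  by apply: sumr_ge0 => f _; apply: mulr_ge0 => //; case/andP: (U01 f c).
rewrite -(W1 om); apply: ler_sum => f _; rewrite -[leRHS]mulr1.
by apply: ler_wpM2l => //; case/andP: (U01 f c).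
Qed.

Lemma integrable_score_diff c c' : P.-integrable setT (EFin \o (sc c' \- sc c)).
Proof.
apply: (@le_integrable _ _ _ P setT measurableT _ (EFin \o cst 1)).
- by apply/measurable_EFinP; apply: measurable_funB; apply: measurable_score.
- move=> om _ /=; rewrite lee_fin normr1 ler_norml.
  by have := score_ge0_le1 c om; have := score_ge0_le1 c' om; lra.
- exact: finite_measure_integrable_cst.
Qed.

Lemma integrable_score c : P.-integrable setT (EFin \o sc c).
Proof.
apply: (@le_integrable _ _ _ P setT measurableT _ (EFin \o cst 1)).
- by apply/measurable_EFinP; apply: measurable_score.
- move=> om _ /=; rewrite lee_fin normr1 ger0_norm; by case/andP: (score_ge0_le1 c om).
- exact: finite_measure_integrable_cst.
Qed.

Lemma measurable_score_lt c c' : measurable [set om | sc c om < sc c' om].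
Proof. by apply: measurable_set_lt; apply: measurable_score. Qed.

Lemma wprefE c c' : [set om | wpref U W c c' om] = ~` [set om | sc c om < sc c' om].
Proof. by apply/seteqP; split => om /=; rewrite /wpref leNgt => /negP. Qed.

Lemma measurable_wpref c c' : measurable [set om | wpref U W c c' om].
Proof. by rewrite wprefE; apply/measurableC/measurable_score_lt. Qed.

(* [qLOCV] and [qLOICV Rs] are, up to conversion, [prge_vec predT] and
   [prge_vec (fun y => y \notin Rs)]. *)
Definition prge_vec (keep : pred M) x :=
  sort_asc [seq prge P U W x y | y <- enum M & keep y && (y != x)].

Lemma count_prge_vec (keep : pred M) x (q : pred (\bar R)) :
  count q (prge_vec keep x) = #|[set y | keep y && (y != x) && q (prge P U W x y)]%SET|.
Proof.
rewrite /prge_vec /sort_asc count_sort count_map count_filter count_enum.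
by apply: eq_card => y; rewrite !inE andbC.
Qed.

Lemma size_prge_vec (keep : pred M) x : keep x ->
  size (prge_vec keep x) = #|[set y | keep y]%SET|.-1.
Proof.
move=> kx; rewrite -(count_predT (prge_vec keep x)) count_prge_vec.
rewrite (cardsD1 x [set y | keep y]%SET) inE kx add1n /=.
by apply: eq_card => y; rewrite !inE andbT andbC.
Qed.

Section AlmostSurelyBetter.
Variables c c' : M.
Hypothesis better_as : P [set om | sc c om < sc c' om] = 1%E.

Lemma not_better_null : P (~` [set om | sc c om < sc c' om]) = 0%E.
Proof. by rewrite probability_setC ?better_as ?subee //; apply: measurable_score_lt. Qed.

Lemma prge_worse_better : prge P U W c c' = 0%E.
Proof. by rewrite /prge wprefE not_better_null. Qed.

Lemma prge_better_worse : prge P U W c' c = 1%E.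
Proof.
apply/eqP; rewrite eq_le probability_le1 /=; last exact: measurable_wpref.
apply: (@le_trans _ _ (P [set om | sc c om < sc c' om])); first by rewrite better_as.
apply: le_measure => [||om /ltW //]; rewrite inE.
  exact: measurable_score_lt.
exact: measurable_wpref.
Qed.

Lemma le_measure_as (A B : set Omega) : measurable A -> measurable B ->
  A `<=` B `|` ~` [set om | sc c om < sc c' om] -> (P A <= P B)%E.
Proof.
move=> mA mB AB; have mC := measurableC (measurable_score_lt c c').
apply: le_trans (le_measure _ _ _ AB) _; rewrite ?inE //; first exact: measurableU.
apply: le_trans (measureU2 _ mB mC) _.
set z := (X in (_ + X <= _)%E); have -> : z = 0%E by exact: not_better_null.
by rewrite adde0.
Qed.

Lemma prge_le_better x : (prge P U W c x <= prge P U W c' x)%E.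
Proof.
apply: le_measure_as; try exact: measurable_wpref.
move=> om /= cx; have [lt|nlt] := boolP (sc c om < sc c' om); last by right; apply/negP.
by left; apply: le_trans cx (ltW lt).
Qed.

Lemma eHEUF_lt_better : (eHEUF P U W c < eHEUF P U W c')%E.
Proof.
have finc : eHEUF P U W c \is a fin_num := integrable_fin_num measurableT (integrable_score c).
have -> : eHEUF P U W c' = (eHEUF P U W c + \int[P]_om ((sc c' \- sc c) om)%:E)%E.
  rewrite /eHEUF -integralD_EFin //; [|exact: integrable_score|exact: integrable_score_diff].
  by apply: eq_integral => om _; rewrite /= -EFinD addrCA subrr addr0.
rewrite lteDl // integral_gt0_as //; first exact: integrable_score_diff.
by rewrite -better_as; congr (P _); apply/seteqP; split => om /=; rewrite subr_gt0.
Qed.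

Lemma pHERF_not_max (Rs : {set M}) : c \notin Rs -> c' \notin Rs -> c' != c ->
  ~ (forall x, x \notin Rs -> (pHERF P U W Rs x <= pHERF P U W Rs c)%E).
Proof.
move=> cR c'R c'c cmax.
(* Every outcome lies in [H x] for a remaining [x] of maximal score, while each
   such [H x] is at most as likely as [H c], which is contained in the null
   event that [c] is weakly better than [c']. *)
pose H x := [set om | forall y, y \notin Rs -> y != x -> wpref U W x y om].
have mH x : measurable (H x).
  have -> : H x = \bigcap_(y in [set y | y \notin Rs /\ y != x]) [set om | wpref U W x y om].
    by apply/seteqP; split => om /= Hom => [y [yR yx]|y yR yx]; apply: Hom.
  by apply: fin_bigcap_measurable => [|y _]; [exact: finite_finset|exact: measurable_wpref].
have Hc0 : P (H c) = 0%E.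
  apply/eqP; rewrite -measure_le0 -(prge_worse_better).
  by apply: le_measure; rewrite ?inE; [exact: mH|exact: measurable_wpref|move=> om; apply].
have Hnull x : x \notin Rs -> P.-negligible (H x).
  move=> xR; apply/negligibleP => //; apply/eqP; rewrite -measure_le0 -Hc0; exact: cmax.
have : P.-negligible [set: Omega].
  apply: (negligibleS (_ : _ `<=` \big[setU/set0]_(x <- enum M | x \notin Rs) H x)).
    rewrite -bigcup_seq_cond => om _.
    have [x xR xmax] := @arg_maxP _ _ _ c (fun x => x \notin Rs) (fun x => sc x om) cR.
    by exists x; [rewrite /= mem_enum | move=> y yR _; apply: xmax].
  by elim/big_ind: _ => //; [exact: negligible_set0|exact: negligibleU].
move/negligibleP => /(_ measurableT) PT0.
have /eqP : (1 = 0 :> \bar R)%E by rewrite -(probability_setT P); exact: PT0.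
by rewrite onee_eq0.
Qed.

Lemma prge_vec_not_lexle (keep : pred M) : keep c -> keep c' -> c' != c ->
  ~~ lexle (prge_vec keep c') (prge_vec keep c).
Proof.
move=> kc kc' c'c.
(* [swap] embeds the colleges that [c] beats with probability [>= z] into those
   that [c'] beats with probability [>= z]; for [z = 1] the embedding misses [c]. *)
pose A z := [set y | keep y && (y != c) && (z <= prge P U W c y)%E]%SET.
pose B z := [set y | keep y && (y != c') && (z <= prge P U W c' y)%E]%SET.
pose swap y := if y == c' then c else y.
have swap_inj z : {in A z &, injective swap}.
  move=> x y /[!inE] /andP[/andP[_ xc] _] /andP[/andP[_ yc] _]; rewrite /swap.
  by case: eqP => [->|_]; case: eqP => [->|_] // e; [move: yc|move: xc]; rewrite -e eqxx.
have swap_sub z : (swap @: A z \subset B z)%SET.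
  apply/fintype.subsetP => _ /imsetP[x /[!inE] /andP[/andP[kx xc] zx] ->]; rewrite /swap.
  case: eqP => [xc'|/eqP xc']; last by rewrite kx xc' (le_trans zx (prge_le_better x)).
  by rewrite kc eq_sym c'c prge_better_worse /= (le_trans zx) // xc' prge_worse_better lee01.
apply: sorted_count_ge_not_lexle.
- by apply: sort_sorted; exact: le_total.
- by apply: sort_sorted; exact: le_total.
- by rewrite !size_prge_vec.
- move=> z; rewrite !count_prge_vec -(card_in_imset (swap_inj z)).
  exact: subset_leq_card (swap_sub z).
exists 1%E; rewrite !count_prge_vec -(card_in_imset (swap_inj _)).
apply: proper_card; apply/properP; split; first exact: swap_sub.
exists c; first by rewrite inE kc eq_sym c'c prge_better_worse lexx.
apply/imsetP => -[x /[!inE] /andP[/andP[kx xc] one_x]]; rewrite /swap.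
case: eqP => [xc'|_ e]; last by move: xc; rewrite e eqxx.
by move: one_x; rewrite xc' prge_worse_better lee_fin ler10.
Qed.

End AlmostSurelyBetter.
End Score.

Lemma next_not_as_dominated (R : realType) (d : measure_display) (Omega : measurableType d)
    (P : probability Omega R) (M F : finType) (m : method)
    (U : F -> M -> R) (W : F -> Omega -> R) (nx : {set M} -> M) (Rs : {set M}) c' :
  valid_type U W -> next_spec P m U W nx ->
  Rs != [set: M]%SET -> c' \notin Rs -> c' != nx Rs ->
  P [set om | score U W (nx Rs) om < score U W c' om] <> 1%E.
Proof.
move=> UW_valid spec RsT c'R c'c better_as.
have [cR opt] := spec Rs RsT; move: opt (opt c' c'R).
case: m {spec} => opt /=.
- by apply/negP; exact: (prge_vec_not_lexle UW_valid better_as (keep := predT)).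
- by apply/negP; exact: (prge_vec_not_lexle UW_valid better_as (keep := fun y => y \notin Rs)).
- by move=> _; apply: (pHERF_not_max UW_valid better_as cR c'R c'c).
- by rewrite leNgt (eHEUF_lt_better UW_valid better_as).
Qed.

Theorem theorem6
  (R : realType) (d : measure_display) (Omega : measurableType d)
  (P : probability Omega R) (N M F : finType)
  (cap : M -> nat) (cpref : M -> rel N)
  (m : method)
  (u : N -> F -> M -> R) (w : N -> F -> Omega -> R)
  (s : N) (u' : F -> M -> R) (w' : F -> Omega -> R)
  (nx nx' : N -> {set M} -> M)
  (pi pi' : N -> option M) :
  (forall c, (0 < cap c)%N) ->
  (forall c, strict_total (cpref c)) ->
  (forall t, valid_type (u t) (w t)) ->
  valid_type u' w' ->
  (forall t, next_spec P m (u t) (w t) (nx t)) ->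
  next_spec P m u' w' (nx' s) ->
  (forall t, t != s -> nx' t = nx t) ->
  da_outcome cap cpref nx pi ->
  da_outcome cap cpref nx' pi' ->
  P [set om | spref (u s) (w s) (pi' s) (pi s) om] <> 1%E.
Proof.
move=> _ cpref_total uw_valid _ nx_spec _ nx'_nx outA outB.
have null_neq1 : P set0 <> 1%E by rewrite measure0 => /eqP; rewrite eq_sym onee_eq0.
case sB: (pi' s) => [c'|]; last by rewrite (_ : [set om | _] = set0).
have [X [XT c'X ->]] := manipulation_outcome cpref_total nx'_nx outA outB sB.
have [->|c'c] := eqVneq c' (nx s X).
  by rewrite (_ : [set om | _] = set0) //; apply/seteqP; split => om //=; rewrite ltxx.
exact: next_not_as_dominated (uw_valid s) (nx_spec s) XT c'X c'c.
Qed.
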